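(* Assume (F) and (H), and let $\bar c=\lim_{\varepsilon\to0^+}c_\varepsilon^*$. Let $\varepsilon_n\to0^+$ be a sequence along which: - $v_{\varepsilon_n}\to\bar v$ uniformly on compact subsets of $\mathbb R$; - $y_{\varepsilon_n}\to\bar y$ uniformly on $[0,1]$. Assume that for some real numbers $z_0<z_1$ and some $v_0\in[0,1)$ one has $\bar v(z)=z-z_0+v_0$ for all $z\in[z_0,z_1]$, and set $v_1:=\bar v(z_1)\in(0,1]$, so that $z_1-z_0=v_1-v_0$. Then $\bar c=\frac{F(v_1)-F(v_0)-h(v_1)+h(v_0)}{v_1-v_0}+\frac{\bar y(v_1)-\bar y(v_0)}{v_1-v_0}$, where $F(v)=\int_0^v f(s)\,ds$.
   Context: Assumptions. - (F): $f\in C([0,1])$, $f(0)=f(1)=0$, $f(s)>0$ for $s\in(0,1)$, and there is $k>0$ with $f(s)\le ks$ and $f(s)\le k(1-s)$ for all $s\in[0,1]$. - (H): $h\in C^2([0,1])$ with $h(0)=h'(0)=0$. Problems and speeds. - For $\varepsilon>0$ and $c\in\mathbb R$, a front profile is a function $v$ with $|v'|<1$, $v(0)=1/2$, satisfying $\varepsilon\big(v'/\sqrt{1-(v')^2}\big)'-(c+h'(v))v'+f(v)=0$ on $\mathbb R$, $v(-\infty)=0$, $v(+\infty)=1$, $v'>0$. - It corresponds to the solution $y(v)=\varepsilon\big(1/\sqrt{1-v'(z(v))^2}-1\big)$, where $z(\cdot)$ is the inverse of $v$, of the first-order problem (P1): $y'=(c+h'(v))\frac{\sqrt{y(2\varepsilon+y)}}{\varepsilon+y}-f(v)$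 on $[0,1]$, $y(0)=y(1)=0$, $y>0$ on $(0,1)$. - $c$ is admissible if (P1) has a solution. The admissible speeds form $[c_\varepsilon^*,+\infty)$, and $c_\varepsilon^*$ (the critical speed) is nondecreasing in $\varepsilon$. - $v_\varepsilon$ is the critical profile (the front profile with $c=c_\varepsilon^*$, $v_\varepsilon(0)=1/2$), and $y_\varepsilon$ is its associated solution of (P1). *)

From Stdlib Require Import Reals Lra.
From Coquelicot Require Import Coquelicot.
Open Scope R_scope.

Definition hypF (f : R -> R) : Prop :=
  (forall x, 0 <= x <= 1 -> continuous f x) /\
  f 0 = 0 /\ f 1 = 0 /\
  (forall s, 0 < s < 1 -> 0 < f s) /\
  exists k, 0 < k /\ forall s, 0 <= s <= 1 -> f s <= k * s /\ f s <= k * (1 - s).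

(* Assumption (H): h in C^2([0,1]) (read as: twice differentiable with
   continuous second derivative at every point of [0,1]), h(0)=h'(0)=0. *)
Definition hypH (h : R -> R) : Prop :=
  (forall x, 0 <= x <= 1 ->
     ex_derive h x /\ ex_derive (Derive h) x /\ continuous (Derive (Derive h)) x) /\
  h 0 = 0 /\ Derive h 0 = 0.

Definition front_profile (f h : R -> R) (eps c : R) (v : R -> R) : Prop :=
  (forall z, ex_derive v z) /\
  (forall z, Rabs (Derive v z) < 1) /\
  v 0 = 1/2 /\
  (forall z, ex_derive (fun t => Derive v t / sqrt (1 - (Derive v t)^2)) z) /\
  (forall z, eps * Derive (fun t => Derive v t / sqrt (1 - (Derive v t)^2)) z
             - (c + Derive h (v z)) * Derive v z + f (v z) = 0) /\
  is_lim v m_infty 0 /\ is_lim v p_infty 1 /\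
  (forall z, 0 < Derive v z).

Definition P1_solution (f h : R -> R) (eps c : R) (y : R -> R) : Prop :=
  (forall v, 0 <= v <= 1 -> continuous y v) /\
  (forall v, 0 < v < 1 ->
     is_derive y v ((c + Derive h v) * sqrt (y v * (2 * eps + y v)) / (eps + y v) - f v)) /\
  y 0 = 0 /\ y 1 = 0 /\
  (forall v, 0 < v < 1 -> 0 < y v).

Definition admissible (f h : R -> R) (eps : R) : R -> Prop :=
  fun c => exists y, P1_solution f h eps c y.

Definition cstar (f h : R -> R) (eps : R) : R :=
  real (Glb_Rbar (admissible f h eps)).

Definition associated_y (eps : R) (v y : R -> R) : Prop :=
  y 0 = 0 /\ y 1 = 0 /\
  forall z, y (v z) = eps * (1 / sqrt (1 - (Derive v z)^2) - 1).

Definition Fprim (f : R -> R) (x : R) : R := RInt f 0 x.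

From Stdlib Require Import Reals Lra.
From Coquelicot Require Import Coquelicot.
Open Scope R_scope.

(* For a front profile v with speed c write g = v' / sqrt(1 - v'^2) (the
   "flux").  The profile equation says that c v + h(v) - eps g is a primitive
   of f(v), so on [z0, z1]
     eps g(z1) - eps g(z0) = c (v(z1) - v(z0)) + h(v(z1)) - h(v(z0))
                             - int_{z0}^{z1} f(v).                     (E)
   The associated solution satisfies y(v) = eps (sqrt(1 + g^2) - 1), hence
   0 <= eps g - y(v) <= eps, and (y o v)' = v' (eps g'); since eps g' is
   bounded by |c| + sup|h'| + sup f, Cauchy's mean value theorem makes y
   Lipschitz on (0, 1), and a plateau argument extends the bound up to the
   endpoints 0 and 1.  Consequently eps_n g_n(z) -> ybar(vbar(z)).  The
   integral in (E) converges by uniform convergence of v_n on [z0, z1] and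
   the change of variables s = z - z0 + v0.  Passing to the limit in (E)
   gives the theorem. *)

Lemma continuity_pt_of_ex_derive (F : R -> R) x :
  ex_derive F x -> continuity_pt F x.
Proof.
  intros HF. apply continuity_pt_filterlim.
  now apply (ex_derive_continuous (K := R_AbsRing) (V := R_NormedModule)).
Qed.

Lemma cauchy_mvt (F G dF dG : R -> R) a b : a <> b ->
  (forall x, is_derive F x (dF x)) -> (forall x, is_derive G x (dG x)) ->
  exists x, (F b - F a) * dG x = (G b - G a) * dF x.
Proof.
  intros Hab HF HG.
  set (H := fun t => F t * (G b - G a) - G t * (F b - F a)).
  assert (HdH : forall x, is_derive H x (dF x * (G b - G a) - dG x * (F b - F a))).
  { intros x. unfold H. auto_derive.
    - split; [exists (dF x); apply HF | split; [exists (dG x); apply HG | easy]].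
    - erewrite (is_derive_unique _ x (dF x)) by exact (HF x).
      erewrite (is_derive_unique _ x (dG x)) by exact (HG x). ring. }
  destruct (MVT_gen H a b _ (fun x _ => HdH x)) as [x [_ Hx]].
  { intros x _. apply continuity_pt_of_ex_derive. eexists; apply HdH. }
  exists x.
  assert (HHab : H b - H a = 0) by (unfold H; ring).
  assert (Hba : b - a <> 0) by lra.
  rewrite HHab in Hx. symmetry in Hx. apply Rmult_integral in Hx.
  destruct Hx as [Hx | Hx]; [lra | contradiction].
Qed.

Lemma frac_monotone a b e : 0 < e -> 0 <= a <= b -> a / (e + a) <= b / (e + b).
Proof.
  intros He Hab. apply (Rmult_le_reg_r ((e + a) * (e + b))); [nra |].
  field_simplify; nra.
Qed.

Lemma relativistic_factor d : 0 < d < 1 ->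
  let s := sqrt (1 - d ^ 2) in
  0 < s /\ 1 - d <= s <= 1 /\ sqrt (1 + (d / s) ^ 2) = 1 / s.
Proof.
  intros Hd s.
  assert (Hs : 0 < s) by (apply sqrt_lt_R0; nra).
  assert (Hs2 : s ^ 2 = 1 - d ^ 2) by (rewrite <- Rsqr_pow2; apply Rsqr_sqrt; nra).
  repeat split; try nra.
  replace (1 + (d / s) ^ 2) with (Rsqr (1 / s)).
  - apply sqrt_Rsqr. apply Rlt_le, Rdiv_lt_0_compat; lra.
  - assert (Hd2 : d ^ 2 = 1 - s ^ 2) by lra.
    unfold Rsqr. unfold Rdiv. rewrite Rpow_mult_distr, Hd2. field. lra.
Qed.

Definition flux (v : R -> R) (z : R) : R :=
  Derive v z / sqrt (1 - (Derive v z) ^ 2).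

Section FrontProfile.

Variables (f h : R -> R) (eps c : R) (v : R -> R).
Hypothesis Hv : front_profile f h eps c v.

Lemma profile_is_derive z : is_derive v z (Derive v z).
Proof. apply Derive_correct, Hv. Qed.

Lemma profile_continuous z : continuity_pt v z.
Proof. apply continuity_pt_of_ex_derive, Hv. Qed.

Lemma profile_slope z : 0 < Derive v z < 1.
Proof.
  destruct Hv as (_ & Habs & _ & _ & _ & _ & _ & Hpos).
  specialize (Habs z). apply Rabs_def2 in Habs. specialize (Hpos z). lra.
Qed.

Lemma profile_mvt a b : a <= b -> exists x, a <= x <= b /\ v b - v a = Derive v x * (b - a).
Proof.
  intros Hab.
  destruct (MVT_gen v a b (Derive v)) as [x [Hx E]].
  - intros x _; apply profile_is_derive.
  - intros x _; apply profile_continuous.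
  - rewrite Rmin_left, Rmax_right in Hx by lra. now exists x.
Qed.

Lemma profile_increasing a b : a < b -> v a < v b.
Proof.
  intros Hab. destruct (profile_mvt a b) as [x [_ E]]; [lra |].
  pose proof (profile_slope x). nra.
Qed.

Lemma profile_nondecreasing a b : a <= b -> v a <= v b.
Proof.
  intros [Hab | <-]; [now apply Rlt_le, profile_increasing | lra].
Qed.

Lemma profile_near_minus_infty e : 0 < e -> exists M, forall x, x < M -> Rabs (v x) < e.
Proof.
  intros He. destruct Hv as (_ & _ & _ & _ & _ & Hm & _).
  apply is_lim_spec in Hm. destruct (Hm (mkposreal e He)) as [M HM].
  exists M. intros x Hx. rewrite <- (Rminus_0_r (v x)). now apply HM.
Qed.

Lemma profile_near_plus_infty e : 0 < e -> exists M, forall x, M < x -> Rabs (v x - 1) < e.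
Proof.
  intros He. destruct Hv as (_ & _ & _ & _ & _ & _ & Hp & _).
  apply is_lim_spec in Hp. destruct (Hp (mkposreal e He)) as [M HM].
  exists M. exact HM.
Qed.

Lemma profile_range z : 0 < v z < 1.
Proof.
  split.
  - destruct (Rlt_le_dec 0 (v z)) as [| Hle]; [easy | exfalso].
    assert (Hlt : v (z - 1) < v z) by (apply profile_increasing; lra).
    destruct (profile_near_minus_infty (v z - v (z - 1))) as [M HM]; [lra |].
    set (x := Rmin M (z - 1) - 1).
    assert (Hx : v x < v (z - 1)).
    { apply profile_increasing. unfold x. pose proof (Rmin_r M (z - 1)). lra. }
    assert (HxM : x < M) by (unfold x; pose proof (Rmin_l M (z - 1)); lra).
    specialize (HM x HxM). apply Rabs_def2 in HM. lra.
  - destruct (Rlt_le_dec (v z) 1) as [| Hle]; [easy | exfalso].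
    assert (Hlt : v z < v (z + 1)) by (apply profile_increasing; lra).
    destruct (profile_near_plus_infty (v (z + 1) - v z)) as [M HM]; [lra |].
    set (x := Rmax M (z + 1) + 1).
    assert (Hx : v (z + 1) < v x).
    { apply profile_increasing. unfold x. pose proof (Rmax_r M (z + 1)). lra. }
    assert (HxM : M < x) by (unfold x; pose proof (Rmax_l M (z + 1)); lra).
    specialize (HM x HxM). apply Rabs_def2 in HM. lra.
Qed.

Lemma profile_onto s : 0 < s < 1 -> exists z, v z = s.
Proof.
  intros Hs.
  destruct (profile_near_minus_infty s) as [Ma HMa]; [lra |].
  destruct (profile_near_plus_infty (1 - s)) as [Mb HMb]; [lra |].
  assert (Ha := HMa (Ma - 1) ltac:(lra)). apply Rabs_def2 in Ha.
  assert (Hb := HMb (Mb + 1) ltac:(lra)). apply Rabs_def2 in Hb.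
  destruct (IVT_gen v (Ma - 1) (Mb + 1) s) as [z [_ Hz]].
  - intros x; apply profile_continuous.
  - split; [apply Rle_trans with (v (Ma - 1)); [apply Rmin_l | lra]
           | apply Rle_trans with (v (Mb + 1)); [lra | apply Rmax_r]].
  - now exists z.
Qed.

Lemma profile_ode z :
  eps * Derive (flux v) z = (c + Derive h (v z)) * Derive v z - f (v z).
Proof.
  destruct Hv as (_ & _ & _ & _ & Hode & _). specialize (Hode z). unfold flux. lra.
Qed.

(* Integrating the profile equation: z |-> c v + h(v) - eps * flux is a
   primitive of f(v). *)
Lemma profile_energy_identity : hypF f -> hypH h -> forall z0 z1,
  eps * flux v z1 - eps * flux v z0 =
  c * (v z1 - v z0) + (h (v z1) - h (v z0)) - RInt (fun z => f (v z)) z0 z1.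
Proof.
  intros HF HH z0 z1.
  set (Phi := fun z => c * v z + h (v z) - eps * flux v z).
  assert (HPhi : forall z, is_derive Phi z (f (v z))).
  { intros z. pose proof (profile_range z) as Hr.
    assert (Hh : ex_derive h (v z)) by (apply HH; lra).
    unfold Phi. auto_derive.
    - repeat split; try apply Hv; easy.
    - change (fun x => v x) with v; change (fun x => h x) with h;
        change (fun x => flux v x) with (flux v).
      pose proof (profile_ode z). lra. }
  assert (HI : is_RInt (fun z => f (v z)) z0 z1 (minus (Phi z1) (Phi z0))).
  { apply (is_RInt_derive (V := R_CompleteNormedModule)); [intros; apply HPhi |].
    intros x _. apply continuous_comp.
    - apply continuity_pt_filterlim, profile_continuous.
    - pose proof (profile_range x). apply HF. lra. }
  apply (is_RInt_unique (V := R_CompleteNormedModule)) in HI. rewrite HI.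
  unfold Phi, minus, plus, opp; simpl. ring.
Qed.

Lemma flux_derivative_bound M K :
  (forall s, 0 <= s <= 1 -> Rabs (Derive h s) <= M) ->
  (forall s, 0 < s < 1 -> Rabs (f s) <= K) ->
  forall z, Rabs (eps * Derive (flux v) z) <= Rabs c + M + K.
Proof.
  intros HM HK z. rewrite profile_ode.
  pose proof (profile_slope z). pose proof (profile_range z).
  assert (Hh : Rabs (Derive h (v z)) <= M) by (apply HM; lra).
  assert (Hf : Rabs (f (v z)) <= K) by (apply HK; lra).
  assert (Hch : Rabs (c + Derive h (v z)) <= Rabs c + M).
  { eapply Rle_trans; [apply Rabs_triang | lra]. }
  eapply Rle_trans; [apply Rabs_triang |]. rewrite Rabs_Ropp, Rabs_mult.
  rewrite (Rabs_right (Derive v z)) by lra.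
  pose proof (Rabs_pos (c + Derive h (v z))). nra.
Qed.

Section AssociatedSolution.

Variable y : R -> R.
Hypothesis Heps : 0 < eps.
Hypothesis Hy : associated_y eps v y.

Lemma assoc_y_flux z : y (v z) = eps * sqrt (1 + flux v z ^ 2) - eps.
Proof.
  destruct Hy as (_ & _ & Hyv). rewrite Hyv. unfold flux.
  destruct (relativistic_factor _ (profile_slope z)) as (_ & _ & E).
  rewrite E. ring.
Qed.

Lemma assoc_y_flux_gap z : 0 <= y (v z) /\ 0 <= eps * flux v z - y (v z) <= eps.
Proof.
  destruct Hy as (_ & _ & Hyv). rewrite Hyv. unfold flux.
  destruct (relativistic_factor _ (profile_slope z)) as (Hs & Hs1 & _).
  pose proof (profile_slope z).
  set (d := Derive v z) in *. set (s := sqrt (1 - d ^ 2)) in *.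
  replace (eps * (d / s) - eps * (1 / s - 1)) with (eps * ((d - 1 + s) / s))
    by (field; lra).
  replace (eps * (1 / s - 1)) with (eps * ((1 - s) / s)) by (field; lra).
  repeat split.
  - apply Rmult_le_pos, Rdiv_le_0_compat; lra.
  - apply Rmult_le_pos, Rdiv_le_0_compat; lra.
  - rewrite <- (Rmult_1_r eps) at 2. apply Rmult_le_compat_l; [lra |].
    apply (Rmult_le_reg_r s); [lra |]. field_simplify; lra.
Qed.

Lemma profile_slope_lower z : y (v z) / (eps + y (v z)) <= Derive v z.
Proof.
  destruct Hy as (_ & _ & Hyv). rewrite Hyv.
  destruct (relativistic_factor _ (profile_slope z)) as (Hs & Hs1 & _).
  pose proof (profile_slope z).
  set (d := Derive v z) in *. set (s := sqrt (1 - d ^ 2)) in *.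
  replace (eps * (1 / s - 1) / (eps + eps * (1 / s - 1))) with (1 - s)
    by (field; lra).
  lra.
Qed.

(* Along the profile, (y o v)' = v' * (eps * flux'): this is (P1) in the
   variable z. *)
Lemma assoc_y_is_derive z :
  is_derive (fun t => y (v t)) z (Derive v z * (eps * Derive (flux v) z)).
Proof.
  apply (is_derive_ext (fun t => eps * sqrt (1 + flux v t ^ 2) - eps)).
  { intros t. now rewrite assoc_y_flux. }
  destruct (relativistic_factor _ (profile_slope z)) as (Hs & _ & E).
  assert (Hpos : 0 < 1 + flux v z ^ 2) by nra.
  auto_derive.
  - repeat split; [apply Hv | lra].
  - change (fun x => flux v x) with (flux v).
    replace (1 + flux v z * (flux v z * 1)) with (1 + flux v z ^ 2) by ring.
    change (sqrt (1 + flux v z ^ 2) = 1 / sqrt (1 - Derive v z ^ 2)) in E.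
    rewrite E. replace (flux v z) with (Derive v z / sqrt (1 - Derive v z ^ 2))
      by reflexivity.
    field. lra.
Qed.

Variable C : R.
Hypothesis HC : forall z, Rabs (eps * Derive (flux v) z) <= C.

(* By Cauchy's mean value theorem, y is C-Lipschitz on the range of v. *)
Lemma assoc_y_lipschitz a b : Rabs (y (v b) - y (v a)) <= C * Rabs (v b - v a).
Proof.
  destruct (Req_dec a b) as [<- | Hab].
  { rewrite !Rminus_diag, Rabs_R0. lra. }
  destruct (cauchy_mvt (fun t => y (v t)) v _ (Derive v) a b Hab
              assoc_y_is_derive profile_is_derive) as [x Hx].
  pose proof (profile_slope x) as Hd.
  assert (E : y (v b) - y (v a) = (v b - v a) * (eps * Derive (flux v) x)).
  { apply (Rmult_eq_reg_r (Derive v x)); [lra | lra]. }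
  rewrite E, Rabs_mult, Rmult_comm.
  apply Rmult_le_compat_r; [apply Rabs_pos | apply HC].
Qed.

(* y o v cannot stay above a > 0 on an interval of length (eps + a) / a:
   the slope of v would then be at least a / (eps + a) there, and v would
   increase by at least 1. *)
Lemma assoc_y_no_long_plateau a p q : 0 < a -> q - p = (eps + a) / a ->
  (forall x, p <= x <= q -> a <= y (v x)) -> False.
Proof.
  intros Ha Hpq Hplateau.
  assert (Hlen : 0 < q - p) by (rewrite Hpq; apply Rdiv_lt_0_compat; lra).
  destruct (profile_mvt p q) as [x [Hx E]]; [lra |].
  assert (Hslope : a / (eps + a) <= Derive v x).
  { eapply Rle_trans; [| apply profile_slope_lower].
    apply frac_monotone; [lra | split; [lra | now apply Hplateau]]. }
  assert (Hincr : 1 <= v q - v p).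
  { rewrite E, Hpq. apply (Rmult_le_compat_r ((eps + a) / a)) in Hslope.
    - replace (a / (eps + a) * ((eps + a) / a)) with 1 in Hslope by (field; lra).
      exact Hslope.
    - apply Rlt_le, Rdiv_lt_0_compat; lra. }
  pose proof (profile_range p). pose proof (profile_range q). lra.
Qed.

Lemma lipschitz_constant_nonneg : 0 <= C.
Proof. eapply Rle_trans; [apply Rabs_pos | apply (HC 0)]. Qed.

Lemma assoc_y_bound_at_one z : y (v z) <= C * (1 - v z).
Proof.
  destruct (Rle_dec (y (v z)) (C * (1 - v z))) as [| Hn]; [easy | exfalso].
  set (a := y (v z) - C * (1 - v z)).
  assert (Ha : 0 < a) by (unfold a; lra).
  apply (assoc_y_no_long_plateau a z (z + (eps + a) / a)); [easy | ring |].
  intros x Hx.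
  assert (Hzx : v z <= v x) by (apply profile_nondecreasing; lra).
  pose proof (assoc_y_lipschitz z x) as HL.
  rewrite (Rabs_right (v x - v z)) in HL by lra.
  apply Rabs_le_between in HL.
  pose proof (profile_range x). pose proof lipschitz_constant_nonneg.
  unfold a. nra.
Qed.

Lemma assoc_y_bound_at_zero z : y (v z) <= C * v z.
Proof.
  destruct (Rle_dec (y (v z)) (C * v z)) as [| Hn]; [easy | exfalso].
  set (a := y (v z) - C * v z).
  assert (Ha : 0 < a) by (unfold a; lra).
  apply (assoc_y_no_long_plateau a (z - (eps + a) / a) z); [easy | ring |].
  intros x Hx.
  assert (Hxz : v x <= v z) by (apply profile_nondecreasing; lra).
  pose proof (assoc_y_lipschitz x z) as HL.
  rewrite (Rabs_right (v z - v x)) in HL by lra.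
  apply Rabs_le_between in HL.
  pose proof (profile_range x). pose proof lipschitz_constant_nonneg.
  unfold a. nra.
Qed.

Lemma assoc_y_bound s z : 0 <= s <= 1 -> Rabs (y (v z) - y s) <= C * Rabs (v z - s).
Proof.
  intros Hs. pose proof (profile_range z).
  pose proof (assoc_y_flux_gap z) as [Hy0 _].
  destruct Hy as (Hy_0 & Hy_1 & _).
  destruct (Req_dec s 0) as [-> | Hs0]; [| destruct (Req_dec s 1) as [-> | Hs1]].
  - rewrite Hy_0, !Rminus_0_r, !Rabs_right by lra. apply assoc_y_bound_at_zero.
  - rewrite Hy_1, Rminus_0_r, Rabs_right, Rabs_left1 by lra.
    replace (- (v z - 1)) with (1 - v z) by ring. apply assoc_y_bound_at_one.
  - destruct (profile_onto s) as [zs <-]; [lra |]. apply assoc_y_lipschitz.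
Qed.

End AssociatedSolution.

End FrontProfile.

Lemma is_lim_seq_dominated (u w : nat -> R) l :
  (forall n, Rabs (u n - l) <= w n) -> is_lim_seq w 0 -> is_lim_seq u l.
Proof.
  intros Hdom Hw.
  apply is_lim_seq_le_le with (u := fun n => l - w n) (w := fun n => l + w n).
  - intros n. specialize (Hdom n). apply Rabs_le_between in Hdom. lra.
  - replace (Finite l) with (Finite (l - 0)) by (f_equal; ring).
    apply is_lim_seq_minus'; [apply is_lim_seq_const | exact Hw].
  - replace (Finite l) with (Finite (l + 0)) by (f_equal; ring).
    apply is_lim_seq_plus'; [apply is_lim_seq_const | exact Hw].
Qed.

Lemma is_lim_seq_dist (u : nat -> R) (l : R) :
  is_lim_seq u l -> is_lim_seq (fun n => Rabs (u n - l)) 0.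
Proof.
  intros Hu. replace (Finite 0) with (Rbar_abs (Finite (l - l)))
    by (simpl; f_equal; rewrite Rminus_diag; apply Rabs_R0).
  apply is_lim_seq_abs, is_lim_seq_minus'; [exact Hu | apply is_lim_seq_const].
Qed.

Lemma is_lim_seq_at_right_0 (F : R -> R) (e : nat -> R) l :
  filterlim F (at_right 0) (locally l) ->
  (forall n, 0 < e n) -> is_lim_seq e 0 -> is_lim_seq (fun n => F (e n)) l.
Proof.
  intros HF He_pos He_lim. unfold is_lim_seq. eapply filterlim_comp; [| exact HF].
  intros P HP. apply He_lim in HP. destruct HP as [N HN].
  exists N. intros n Hn. now apply HN.
Qed.

Lemma hypF_bounded f : hypF f -> exists K, forall s, 0 < s < 1 -> Rabs (f s) <= K.
Proof.
  intros (_ & _ & _ & Hpos & k & Hk & Hfk). exists k. intros s Hs.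
  rewrite Rabs_right by (apply Rle_ge, Rlt_le, Hpos, Hs).
  destruct (Hfk s ltac:(lra)). nra.
Qed.

Lemma hypH_derive_bounded h : hypH h ->
  exists M, forall s, 0 <= s <= 1 -> Rabs (Derive h s) <= M.
Proof.
  intros (Hh & _ & _).
  destruct (continuity_ab_maj (fun s => Rabs (Derive h s)) 0 1) as [x [Hx _]]; [lra | |].
  - intros s Hs. apply continuity_pt_comp with (f1 := Derive h) (f2 := Rabs).
    + apply continuity_pt_of_ex_derive, Hh, Hs.
    + apply Rcontinuity_abs.
  - now exists (Rabs (Derive h x)).
Qed.

Lemma Fprim_difference f a b : hypF f -> 0 <= a <= 1 -> 0 <= b <= 1 ->
  Fprim f b - Fprim f a = RInt f a b.
Proof.
  intros (Hf & _) Ha Hb.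
  assert (Hex : forall p q, 0 <= p <= 1 -> 0 <= q <= 1 -> ex_RInt f p q).
  { intros p q Hp Hq. apply (ex_RInt_continuous (V := R_CompleteNormedModule)).
    intros x Hx. apply Hf. pose proof (Rmin_glb p q 0). pose proof (Rmax_lub p q 1). lra. }
  unfold Fprim. rewrite <- (RInt_Chasles (V := R_CompleteNormedModule) f 0 a b) by (apply Hex; lra).
  unfold plus; simpl. ring.
Qed.

Lemma RInt_comp_uniform_limit (g w : R -> R) (u : nat -> R -> R) a b : a <= b ->
  (forall s, 0 <= s <= 1 -> continuous g s) ->
  (forall n x, a <= x <= b -> 0 <= u n x <= 1) ->
  (forall x, a <= x <= b -> 0 <= w x <= 1) ->
  (forall n, ex_RInt (fun x => g (u n x)) a b) -> ex_RInt (fun x => g (w x)) a b ->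
  (forall e, 0 < e -> exists N, forall n, (N <= n)%nat ->
     forall x, a <= x <= b -> Rabs (u n x - w x) < e) ->
  is_lim_seq (fun n => RInt (fun x => g (u n x)) a b) (RInt (fun x => g (w x)) a b).
Proof.
  intros Hab Hg Hu Hw Hexu Hexw Hconv. apply is_lim_seq_spec. intros e.
  assert (He : 0 < e / (b - a + 1)) by (apply Rdiv_lt_0_compat; [apply cond_pos | lra]).
  destruct (@Heine_cor2 g 0 1 (fun s Hs => proj2 (continuity_pt_filterlim _ _) (Hg s Hs))
              (mkposreal _ He)) as [delta Hdelta]; simpl in Hdelta.
  destruct (Hconv delta (cond_pos delta)) as [N HN]. exists N. intros n Hn.
  rewrite <- (RInt_minus (V := R_CompleteNormedModule)) by easy.
  eapply Rle_lt_trans.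
  - apply abs_RInt_le_const with (M := e / (b - a + 1)); [lra | |].
    + now apply (ex_RInt_minus (V := R_NormedModule)).
    + intros x Hx. apply Rlt_le, Hdelta; [now apply Hu | now apply Hw | now apply HN].
  - apply (Rmult_lt_reg_r (b - a + 1)); [lra |]. field_simplify; [| lra].
    pose proof (cond_pos e). nra.
Qed.

Section VanishingViscosity.

Variables (f h : R -> R) (eps c : nat -> R) (cbar : R).
Variables (v y : nat -> R -> R) (vbar ybar : R -> R).
Hypothesis HF : hypF f.
Hypothesis HH : hypH h.
Hypothesis Heps_pos : forall n, 0 < eps n.
Hypothesis Heps_lim : is_lim_seq eps 0.
Hypothesis Hc : is_lim_seq c cbar.
Hypothesis Hv : forall n, front_profile f h (eps n) (c n) (v n).
Hypothesis Hy : forall n, associated_y (eps n) (v n) (y n).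
Hypothesis Hvconv : forall a b e, 0 < e -> exists N, forall n, (N <= n)%nat ->
  forall z, a <= z <= b -> Rabs (v n z - vbar z) < e.
Hypothesis Hyconv : forall e, 0 < e -> exists N, forall n, (N <= n)%nat ->
  forall s, 0 <= s <= 1 -> Rabs (y n s - ybar s) < e.

Lemma profile_pointwise_limit z : is_lim_seq (fun n => v n z) (vbar z).
Proof.
  apply is_lim_seq_spec. intros e. destruct (Hvconv z z e (cond_pos e)) as [N HN].
  exists N. intros n Hn. apply HN; [easy | lra].
Qed.

Lemma limit_profile_range z : 0 <= vbar z <= 1.
Proof.
  pose proof (profile_pointwise_limit z) as Hlim.
  assert (Hr : forall n, 0 <= v n z <= 1).
  { intros n. pose proof (profile_range _ _ _ _ _ (Hv n) z). lra. }
  split.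
  - apply (is_lim_seq_le (fun _ => 0) (fun n => v n z) 0 (vbar z));
      [apply Hr | apply is_lim_seq_const | exact Hlim].
  - apply (is_lim_seq_le (fun n => v n z) (fun _ => 1) (vbar z) 1);
      [apply Hr | exact Hlim | apply is_lim_seq_const].
Qed.

(* The rescaled fluxes eps_n * flux(v_n) converge pointwise to ybar o vbar:
   they differ from y_n(v_n) by at most eps_n, and y_n is Lipschitz with a
   constant that stays bounded. *)
Lemma flux_limit z : is_lim_seq (fun n => eps n * flux (v n) z) (ybar (vbar z)).
Proof.
  destruct (hypF_bounded f HF) as [K HK].
  destruct (hypH_derive_bounded h HH) as [M HM].
  set (C := fun n => Rabs (c n) + M + K).
  assert (LC : is_lim_seq C (Rabs cbar + M + K)).
  { apply is_lim_seq_plus'; [apply is_lim_seq_plus' | apply is_lim_seq_const].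
    - apply (is_lim_seq_abs _ (Finite cbar)), Hc.
    - apply is_lim_seq_const. }
  pose proof (limit_profile_range z) as Hvbar.
  apply is_lim_seq_dominated with (w := fun n =>
    eps n + C n * Rabs (v n z - vbar z) + Rabs (y n (vbar z) - ybar (vbar z))).
  - intros n.
    assert (HC : forall x, Rabs (eps n * Derive (flux (v n)) x) <= C n)
      by (apply (flux_derivative_bound f h), HK; [apply Hv | apply HM]).
    pose proof (assoc_y_flux_gap _ _ _ _ _ (Hv n) _ (Heps_pos n) (Hy n) z) as [_ Hgap].
    pose proof (assoc_y_bound _ _ _ _ _ (Hv n) _ (Heps_pos n) (Hy n) _ HC _ z Hvbar) as Hlip.
    set (g := eps n * flux (v n) z) in *.
    pose proof (Rabs_triang (g - y n (v n z)) (y n (v n z) - y n (vbar z))) as T1.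
    pose proof (Rabs_triang (g - y n (vbar z)) (y n (vbar z) - ybar (vbar z))) as T2.
    replace (g - y n (v n z) + (y n (v n z) - y n (vbar z))) with (g - y n (vbar z))
      in T1 by ring.
    replace (g - y n (vbar z) + (y n (vbar z) - ybar (vbar z))) with (g - ybar (vbar z))
      in T2 by ring.
    rewrite (Rabs_right (g - y n (v n z))) in T1 by lra. lra.
  - replace (Finite 0) with (Finite (0 + (Rabs cbar + M + K) * 0 + 0)) by (f_equal; ring).
    apply is_lim_seq_plus'; [apply is_lim_seq_plus' |].
    + exact Heps_lim.
    + apply is_lim_seq_mult'; [exact LC |]. apply is_lim_seq_dist, profile_pointwise_limit.
    + apply is_lim_seq_dist. apply is_lim_seq_spec. intros e.
      destruct (Hyconv e (cond_pos e)) as [N HN]. exists N. intros n Hn. now apply HN.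
Qed.

Section LinearPiece.

Variables (z0 z1 v0 : R).
Hypothesis Hz : z0 <= z1.
Hypothesis Hlin : forall z, z0 <= z <= z1 -> vbar z = z - z0 + v0.

Lemma linear_piece_start : vbar z0 = v0.
Proof. rewrite Hlin; lra. Qed.

(* On the linear piece, the integrals of f(v_n) converge to the integral of f
   over [v0, vbar z1], by the change of variables s = z - z0 + v0. *)
Lemma nonlinearity_integral_limit :
  is_lim_seq (fun n => RInt (fun z => f (v n z)) z0 z1) (RInt f v0 (vbar z1)).
Proof.
  destruct HF as (Hf & _).
  set (w := fun z => z - z0 + v0).
  assert (Hw : forall z, z0 <= z <= z1 -> 0 <= w z <= 1).
  { intros z Hzz. unfold w. rewrite <- Hlin by easy. apply limit_profile_range. }
  assert (Hchange : RInt (fun z => f (w z)) z0 z1 = RInt f v0 (vbar z1)).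
  { rewrite (Hlin z1) by lra.
    assert (H := RInt_comp_lin (V := R_CompleteNormedModule) f 1 (v0 - z0) z0 z1).
    replace (1 * z0 + (v0 - z0)) with v0 in H by ring.
    replace (1 * z1 + (v0 - z0)) with (z1 - z0 + v0) in H by ring.
    rewrite <- H.
    - apply RInt_ext. intros x _. unfold w, scal; simpl; unfold mult; simpl.
      rewrite Rmult_1_l. f_equal. ring.
    - apply (ex_RInt_continuous (V := R_CompleteNormedModule)). intros x Hx.
      apply Hf. pose proof (Hw z0 ltac:(lra)). pose proof (Hw z1 ltac:(lra)).
      unfold w in *. rewrite Rmin_left, Rmax_right in Hx by lra. lra. }
  rewrite <- Hchange. apply RInt_comp_uniform_limit; [easy | exact Hf | | exact Hw | | |].
  - intros n x _. pose proof (profile_range _ _ _ _ _ (Hv n) x). lra.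
  - intros n. apply (ex_RInt_continuous (V := R_CompleteNormedModule)). intros x _.
    apply continuous_comp; [apply continuity_pt_filterlim, (profile_continuous _ _ _ _ _ (Hv n)) |].
    pose proof (profile_range _ _ _ _ _ (Hv n) x). apply Hf. lra.
  - apply (ex_RInt_continuous (V := R_CompleteNormedModule)). intros x Hx.
    rewrite Rmin_left, Rmax_right in Hx by lra.
    apply continuous_comp; [| now apply Hf, Hw].
    apply (ex_derive_continuous (K := R_AbsRing) (V := R_NormedModule)).
    unfold w. auto_derive. easy.
  - intros e He. destruct (Hvconv z0 z1 e He) as [N HN]. exists N. intros n Hn x Hx.
    unfold w. rewrite <- Hlin by easy. now apply HN.
Qed.

Lemma limit_energy_identity :
  ybar (vbar z1) - ybar v0 =
  cbar * (vbar z1 - v0) + (h (vbar z1) - h v0) - RInt f v0 (vbar z1).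
Proof.
  assert (Hh : forall s, 0 <= s <= 1 -> continuity_pt h s)
    by (intros s Hs; apply continuity_pt_of_ex_derive, HH, Hs).
  pose proof linear_piece_start as Hstart.
  assert (Lflux : is_lim_seq (fun n => eps n * flux (v n) z1 - eps n * flux (v n) z0)
                    (ybar (vbar z1) - ybar v0)).
  { rewrite <- Hstart. apply is_lim_seq_minus'; apply flux_limit. }
  assert (Lrhs : is_lim_seq (fun n => eps n * flux (v n) z1 - eps n * flux (v n) z0)
    (cbar * (vbar z1 - v0) + (h (vbar z1) - h v0) - RInt f v0 (vbar z1))).
  { eapply is_lim_seq_ext.
    { intros n. symmetry. now apply (profile_energy_identity f h). }
    rewrite <- Hstart.
    apply is_lim_seq_minus'; [apply is_lim_seq_plus' | rewrite Hstart; apply nonlinearity_integral_limit].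
    - apply is_lim_seq_mult'; [exact Hc |].
      apply is_lim_seq_minus'; apply profile_pointwise_limit.
    - apply is_lim_seq_minus'; apply is_lim_seq_continuous;
        try apply Hh, limit_profile_range; apply profile_pointwise_limit. }
  apply is_lim_seq_unique in Lflux. apply is_lim_seq_unique in Lrhs.
  rewrite Lflux in Lrhs. now injection Lrhs.
Qed.

End LinearPiece.

End VanishingViscosity.

Theorem proposition3
  (f h : R -> R) (HF : hypF f) (HH : hypH h)
  (cbar : R)
  (Hcbar : filterlim (cstar f h) (at_right 0) (locally cbar))
  (eps : nat -> R) (Heps_pos : forall n, 0 < eps n) (Heps_lim : is_lim_seq eps 0)
  (v : nat -> R -> R) (y : nat -> R -> R)
  (Hv : forall n, front_profile f h (eps n) (cstar f h (eps n)) (v n))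
  (Hy : forall n, associated_y (eps n) (v n) (y n))
  (vbar ybar : R -> R)
  (Hvconv : forall a b e, 0 < e -> exists N, forall n, (N <= n)%nat ->
              forall z, a <= z <= b -> Rabs (v n z - vbar z) < e)
  (Hyconv : forall e, 0 < e -> exists N, forall n, (N <= n)%nat ->
              forall s, 0 <= s <= 1 -> Rabs (y n s - ybar s) < e)
  (z0 z1 v0 : R) (Hz : z0 < z1) (Hv0 : 0 <= v0 < 1)
  (Hlin : forall z, z0 <= z <= z1 -> vbar z = z - z0 + v0) :
  let v1 := vbar z1 in
  cbar = (Fprim f v1 - Fprim f v0 - h v1 + h v0) / (v1 - v0)
         + (ybar v1 - ybar v0) / (v1 - v0).
Proof.
  intros v1.
  assert (Hc : is_lim_seq (fun n => cstar f h (eps n)) cbar)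
    by now apply is_lim_seq_at_right_0.
  assert (Hlimit := limit_energy_identity f h eps _ cbar v y vbar ybar
                      HF HH Heps_pos Heps_lim Hc Hv Hy Hvconv Hyconv
                      z0 z1 v0 (Rlt_le _ _ Hz) Hlin).
  fold v1 in Hlimit.
  assert (Hv1 : v1 - v0 = z1 - z0) by (unfold v1; rewrite Hlin; lra).
  assert (Hv1_range : 0 <= v1 <= 1)
    by apply (limit_profile_range f h eps _ v vbar Hv Hvconv).
  rewrite Fprim_difference by (easy || lra).
  rewrite Hlimit. field. lra.
Qed.
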